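(* Consider the following implementation of the extended weak descriptor abstract data type (described in the context), with unbounded sequence numbers, and with each operation assigned the linearization point listed in the context. Let $e$ be any execution of this implementation, and let $O_1, O_2, \ldots, O_k$ be the descriptor operations executed in $e$, in the order of their linearization points. Then the responses of $O_1, O_2, \ldots, O_k$ respect the semantics of the extended weak descriptor ADT.
   Context: Asynchronous shared-memory system of processes $1,\ldots,n$; each process has private memory, and shared memory consists of base objects (read/write registers supporting read, write and compare-and-swap (CAS)). An execution is an alternating sequence of configurations and atomic steps starting from the initial configuration. Extended weak descriptor ADT. A descriptor has a type $T$, which determines a set of immutable fields and a set of mutable fields. Operations: $\mathrm{CreateNew}(T, v_1, v_2, \ldots)$ creates a descriptor of type $T$ whose fields are initialized to the given values, and returns a descriptor pointer never before returned by CreateNew. A descriptor created by a CreateNew of type $T$ performed by process $p$ is valid from its creation until $p$ performs its next CreateNew of the same type $T$, after which it is invalid forever. An operation on a valid (resp. invalid) descriptor is valid (resp. invalid). Valid operations: $\mathrm{ReadField}(des,f,dv)$ returns the current value of field $f$ of the descriptor; $\mathrm{ReadImmutables}(des)$ returns the values of all immutable fields; $\mathrm{WriteField}(des,f,v)$ stores $v$ in field $f$; $\mathrm{CASField}(des,f,exp,v)$ lets $v_f$ be the value of $f$ just before, stores $v$ in $f$ if $v_f=exp$, and returns $v_f$. Invalid operations have no effect on any object; an invalid ReadField returns its default argument $dv$, and invalid ReadImmutables and CASField return a special value $\bot$ never contained in any descriptor field. (WriteField and CASField are applied only to mutable fields.) Implementation. For each type $T$ and process $p$ there is one shared object $D_{T,p}$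 holding the immutable fields of type $T$ and a single word $mutables$ containing a sequence number $seq$ (initially $0$) together with all mutable fields; $mutables$ is read and CASed atomically as one word. A descriptor pointer is a pair $\langle q, s\rangle$ of a process name and a sequence number. - $\mathrm{CreateNew}(T, v_1,\ldots)$ by $p$: $oldseq := D_{T,p}.mutables.seq$; write $D_{T,p}.mutables.seq := oldseq+1$; write each field of $D_{T,p}$ (immutable fields directly, mutable fields inside $mutables$) with its corresponding value; write $D_{T,p}.mutables.seq := oldseq+2$; return $\langle p, oldseq+2\rangle$. - $\mathrm{ReadField}(\langle q,s\rangle, f, dv)$: read $result :=$ field $f$ of $D_{T,q}$ (from $D_{T,q}.f$ if immutable, from $D_{T,q}.mutables.f$ if mutable); then read $D_{T,q}.mutables.seq$; if it differs from $s$ return $dv$, else return $result$. - $\mathrm{ReadImmutables}(\langle q,s\rangle)$: read every immutable field of $D_{T,q}$; then read $D_{T,q}.mutables.seq$; if it differs from $s$ return $\bot$, else return the values read. - $\mathrm{WriteField}(\langle q,s\rangle, f, v)$: repeat: $exp := D_{T,q}.mutables$; if $exp.seq\ne s$ return; let $new$ be $exp$ with subfield $f$ replaced by $v$; if $\mathrm{CAS}(D_{T,q}.mutables, exp, new)$ succeeds, return. - $\mathrm{CASField}(\langle q,s\rangle, f, fexp, fnew)$: repeat: $exp := D_{T,q}.mutables$; if $exp.seq\ne s$ return $\bot$; if $exp.f\ne fexp$ return $exp.f$; let $new$ be $exp$ with subfield $f$ replaced by $fnew$; if $\mathrm{CAS}(D_{T,q}.mutables, exp, new)$ succeeds, return $fexp$.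 Linearization points. CreateNew: its first write to the sequence number (setting it to $oldseq+1$). ReadField: if it returns $dv$, at its read of the sequence number; otherwise at its read of field $f$. ReadImmutables: at its read of the sequence number. WriteField: if it returns because $exp.seq\ne s$, at its last read of $mutables$; otherwise at its successful CAS. CASField: if it returns $\bot$ or returns $exp.f$, at its last read of $mutables$; if it returns after a successful CAS, at that CAS. *)

From Stdlib Require List.
From mathcomp Require Import all_boot.
Set Implicit Arguments.
Unset Strict Implicit.
Unset Printing Implicit Defensive.

Section WeakDescriptors.

(* Ty     : descriptor types;
   nimm T : number of immutable fields of type T (indices 0 .. nimm T - 1);
   nmut T : number of mutable fields of type T (indices 0 .. nmut T - 1);
   V      : field values;
   vdef   : an arbitrary default value, only used as the default argument of
            [nth]/[set_nth]; it is never consulted for well-formed invocations;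
   n      : number of processes, named by 'I_n. *)
Variables (Ty : eqType) (nimm nmut : Ty -> nat) (V : eqType) (vdef : V) (n : nat).

Definition ptr := ('I_n * nat)%type.

Inductive field := FImm of nat | FMut of nat.

Inductive op :=
| OCreate of Ty & seq V & seq V            (* CreateNew(T, immutables, mutables) *)
| ORead of Ty & ptr & field & V            (* ReadField(des, f, dv) on a type-T descriptor *)
| OReadImm of Ty & ptr
| OWrite of Ty & ptr & nat & V             (* WriteField(des, f, v), f a mutable field *)
| OCas of Ty & ptr & nat & V & V.          (* CASField(des, f, exp, new), f mutable *)

(* Responses; RBot is the special value bottom, RUnit the (empty) response of WriteField. *)
Inductive resp :=
| RPtr of ptr | RVal of V | RVals of seq V | RBot | RUnit.

Definition upd (A : eqType) (B : Type) (f : A -> B) (a : A) (b : B) : A -> B :=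
  fun x => if x == a then b else f x.

Record astate := AState {
  acreated : Ty -> ptr -> bool;
  acont : Ty -> ptr -> (seq V * seq V);     (* (immutable fields, mutable fields) *)
  acur : Ty -> 'I_n -> option ptr           (* the last descriptor of type T created by p *)
}.

Definition ainit : astate :=
  AState (fun _ _ => false) (fun _ _ => ([::], [::])) (fun _ _ => None).

Definition avalid (s : astate) (T : Ty) (d : ptr) : Prop :=
  exists p, acur s T p = Some d.

Definition afield (c : seq V * seq V) (f : field) : V :=
  match f with FImm i => nth vdef c.1 i | FMut j => nth vdef c.2 j end.

Definition aset_mut (s : astate) (T : Ty) (d : ptr) (j : nat) (v : V) : astate :=
  AState (acreated s)
    (upd (acont s) T (upd (acont s T) d ((acont s T d).1, set_nth vdef (acont s T d).2 j v)))
    (acur s).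

Inductive spec_step (s : astate) (p : 'I_n) : op -> resp -> astate -> Prop :=
| SCreate T a b d :
    ~~ acreated s T d ->
    spec_step s p (OCreate T a b) (RPtr d)
      (AState (upd (acreated s) T (upd (acreated s T) d true))
              (upd (acont s) T (upd (acont s T) d (a, b)))
              (upd (acur s) T (upd (acur s T) p (Some d))))
| SReadValid T d f dv :
    avalid s T d -> spec_step s p (ORead T d f dv) (RVal (afield (acont s T d) f)) s
| SReadInvalid T d f dv :
    ~ avalid s T d -> spec_step s p (ORead T d f dv) (RVal dv) s
| SReadImmValid T d :
    avalid s T d -> spec_step s p (OReadImm T d) (RVals (acont s T d).1) s
| SReadImmInvalid T d :
    ~ avalid s T d -> spec_step s p (OReadImm T d) RBot s
| SWriteValid T d j v :
    avalid s T d -> spec_step s p (OWrite T d j v) RUnit (aset_mut s T d j v)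
| SWriteInvalid T d j v :
    ~ avalid s T d -> spec_step s p (OWrite T d j v) RUnit s
| SCasValidEq T d j fexp fnew :
    avalid s T d -> nth vdef (acont s T d).2 j = fexp ->
    spec_step s p (OCas T d j fexp fnew) (RVal fexp) (aset_mut s T d j fnew)
| SCasValidNeq T d j fexp fnew :
    avalid s T d -> nth vdef (acont s T d).2 j <> fexp ->
    spec_step s p (OCas T d j fexp fnew) (RVal (nth vdef (acont s T d).2 j)) s
| SCasInvalid T d j fexp fnew :
    ~ avalid s T d -> spec_step s p (OCas T d j fexp fnew) RBot s.

(* A sequence of (process, operation, response) -- where the response is
   [None] for a linearized operation that has not returned yet -- respects the
   semantics of the ADT when starting from s. *)
Fixpoint spec_legal (s : astate) (l : seq ('I_n * op * option resp)) : Prop :=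
  match l with
  | [::] => True
  | (p, o, r) :: l' =>
      exists r' s', spec_step s p o r' s' /\ (forall x, r = Some x -> x = r') /\
                    spec_legal s' l'
  end.

(* Shared memory: for each type T and process p the object D_{T,p}, with one
   register per immutable field and one word [mutables] = (seq, mutable fields). *)
Record mem := Mem {
  mimm : Ty -> 'I_n -> nat -> V;
  mmut : Ty -> 'I_n -> (nat * seq V)
}.

(* Local state (program counter + local variables) of a process.  The [t]
   arguments are ghost records of the time of the linearization point. *)
Inductive lstate :=
| LIdle
| LCN0 of Ty & seq V & seq V                          (* CreateNew: read seq *)
| LCN1 of Ty & seq V & seq V & nat                    (* write seq := old+1 (lin. point) *)
| LCNimm of Ty & seq V & seq V & nat & nat & nat      (* old, t, k : write immutable k *)
| LCNmut of Ty & seq V & seq V & nat & nat & nat      (* old, t, k : write mutable k *)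
| LCN2 of Ty & seq V & seq V & nat & nat              (* old, t : write seq := old+2 *)
| LRF0 of Ty & ptr & field & V                        (* ReadField: read field *)
| LRF1 of Ty & ptr & field & V & V & nat              (* result, t : read seq *)
| LRI of Ty & ptr & nat & seq V                       (* ReadImmutables: k, values so far *)
| LWF0 of Ty & ptr & nat & V                          (* WriteField: read mutables *)
| LWF1 of Ty & ptr & nat & V & (nat * seq V)          (* CAS with exp *)
| LCS0 of Ty & ptr & nat & V & V                      (* CASField: read mutables *)
| LCS1 of Ty & ptr & nat & V & V & (nat * seq V).     (* CAS with exp *)

(* History entry: (time of the linearization point, (process, op, response)). *)
Definition hentry := (nat * ('I_n * op * resp))%type.

Definition returned (h : seq hentry) (T : Ty) (d : ptr) : Prop :=
  exists t p a b, List.In (t, (p, OCreate T a b, RPtr d)) h.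

Definition wf_inv (h : seq hentry) (o : op) : Prop :=
  match o with
  | OCreate T a b => size a = nimm T /\ size b = nmut T
  | ORead T d f _ =>
      returned h T d /\ (match f with FImm i => i < nimm T | FMut j => j < nmut T end)
  | OReadImm T d => returned h T d
  | OWrite T d j _ => returned h T d /\ j < nmut T
  | OCas T d j _ _ => returned h T d /\ j < nmut T
  end.

Definition start (o : op) : lstate :=
  match o with
  | OCreate T a b => LCN0 T a b
  | ORead T d f dv => LRF0 T d f dv
  | OReadImm T d => LRI T d 0 [::]
  | OWrite T d j v => LWF0 T d j v
  | OCas T d j e w => LCS0 T d j e w
  end.

Definition set_imm (m : mem) T (p : 'I_n) (k : nat) (v : V) : mem :=
  Mem (upd (mimm m) T (upd (mimm m T) p (upd (mimm m T p) k v))) (mmut m).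
Definition set_mut (m : mem) T (p : 'I_n) (w : nat * seq V) : mem :=
  Mem (mimm m) (upd (mmut m) T (upd (mmut m T) p w)).

(* Every step that returns is the last shared-memory access of the operation. *)
Inductive pstep (p : 'I_n) (t : nat) (h : seq hentry) (m : mem) :
    lstate -> mem -> lstate -> option hentry -> Prop :=
| PInvoke o : wf_inv h o -> pstep p t h m LIdle m (start o) None
| PCN0 T a b : pstep p t h m (LCN0 T a b) m (LCN1 T a b (mmut m T p).1) None
| PCN1 T a b old :
    pstep p t h m (LCN1 T a b old) (set_mut m T p (old.+1, (mmut m T p).2))
          (LCNimm T a b old t 0) None
| PCNimm T a b old t1 k : k < nimm T ->
    pstep p t h m (LCNimm T a b old t1 k) (set_imm m T p k (nth vdef a k))
          (LCNimm T a b old t1 k.+1) None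
| PCNimmEnd T a b old t1 k : nimm T <= k ->
    pstep p t h m (LCNimm T a b old t1 k) m (LCNmut T a b old t1 0) None
| PCNmut T a b old t1 k : k < nmut T ->
    pstep p t h m (LCNmut T a b old t1 k)
          (set_mut m T p ((mmut m T p).1, set_nth vdef (mmut m T p).2 k (nth vdef b k)))
          (LCNmut T a b old t1 k.+1) None
| PCNmutEnd T a b old t1 k : nmut T <= k ->
    pstep p t h m (LCNmut T a b old t1 k) m (LCN2 T a b old t1) None
| PCN2 T a b old t1 :
    pstep p t h m (LCN2 T a b old t1) (set_mut m T p (old.+2, (mmut m T p).2)) LIdle
          (Some (t1, (p, OCreate T a b, RPtr (p, old.+2))))
| PRF0 T q s f dv :
    pstep p t h m (LRF0 T (q, s) f dv) m
          (LRF1 T (q, s) f dv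
                (match f with FImm i => mimm m T q i | FMut j => nth vdef (mmut m T q).2 j end) t)
          None
| PRF1 T q s f dv x t0 :
    pstep p t h m (LRF1 T (q, s) f dv x t0) m LIdle
          (Some (if (mmut m T q).1 == s then (t0, (p, ORead T (q, s) f dv, RVal x))
                 else (t, (p, ORead T (q, s) f dv, RVal dv))))
| PRI T q s k acc : k < nimm T ->
    pstep p t h m (LRI T (q, s) k acc) m (LRI T (q, s) k.+1 (rcons acc (mimm m T q k))) None
| PRIEnd T q s k acc : nimm T <= k ->
    pstep p t h m (LRI T (q, s) k acc) m LIdle
          (Some (t, (p, OReadImm T (q, s), if (mmut m T q).1 == s then RVals acc else RBot)))
| PWF0ret T q s j v : (mmut m T q).1 != s ->
    pstep p t h m (LWF0 T (q, s) j v) m LIdle (Some (t, (p, OWrite T (q, s) j v, RUnit)))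
| PWF0 T q s j v : (mmut m T q).1 = s ->
    pstep p t h m (LWF0 T (q, s) j v) m (LWF1 T (q, s) j v (mmut m T q)) None
| PWF1ok T q s j v w : mmut m T q = w ->
    pstep p t h m (LWF1 T (q, s) j v w) (set_mut m T q (w.1, set_nth vdef w.2 j v)) LIdle
          (Some (t, (p, OWrite T (q, s) j v, RUnit)))
| PWF1fail T q s j v w : mmut m T q <> w ->
    pstep p t h m (LWF1 T (q, s) j v w) m (LWF0 T (q, s) j v) None
| PCS0bot T q s j e w : (mmut m T q).1 != s ->
    pstep p t h m (LCS0 T (q, s) j e w) m LIdle (Some (t, (p, OCas T (q, s) j e w, RBot)))
| PCS0neq T q s j e w : (mmut m T q).1 = s -> nth vdef (mmut m T q).2 j != e ->
    pstep p t h m (LCS0 T (q, s) j e w) m LIdle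
          (Some (t, (p, OCas T (q, s) j e w, RVal (nth vdef (mmut m T q).2 j))))
| PCS0 T q s j e w : (mmut m T q).1 = s -> nth vdef (mmut m T q).2 j = e ->
    pstep p t h m (LCS0 T (q, s) j e w) m (LCS1 T (q, s) j e w (mmut m T q)) None
| PCS1ok T q s j e w x : mmut m T q = x ->
    pstep p t h m (LCS1 T (q, s) j e w x) (set_mut m T q (x.1, set_nth vdef x.2 j w)) LIdle
          (Some (t, (p, OCas T (q, s) j e w, RVal e)))
| PCS1fail T q s j e w x : mmut m T q <> x ->
    pstep p t h m (LCS1 T (q, s) j e w x) m (LCS0 T (q, s) j e w) None.

(* Configurations: shared memory, local states, ghost clock (number of steps so
   far) and ghost history of completed operations. *)
Record config := Config {
  cmem : mem;
  cloc : 'I_n -> lstate;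
  cclk : nat;
  chist : seq hentry
}.

Inductive step : config -> config -> Prop :=
| Step c p m' l' e :
    pstep p (cclk c) (chist c) (cmem c) (cloc c p) m' l' e ->
    step c (Config m' (upd (cloc c) p l') (cclk c).+1
                   (match e with Some x => rcons (chist c) x | None => chist c end)).

Variables (init_imm : Ty -> 'I_n -> nat -> V) (init_mut : Ty -> 'I_n -> seq V).

Definition init_config : config :=
  Config (Mem init_imm (fun T p => (0, init_mut T p))) (fun _ => LIdle) 0 [::].

Inductive reachable : config -> Prop :=
| Reach0 : reachable init_config
| ReachS c c' : reachable c -> step c c' -> reachable c'.

(* Linearized operations whose linearization point has occurred but which have
   not returned yet: only a CreateNew past its first write to the sequence number. *)
Definition pending (p : 'I_n) (l : lstate) : seq (nat * ('I_n * op * option resp)) :=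
  match l with
  | LCNimm T a b _ t1 _ | LCNmut T a b _ t1 _ | LCN2 T a b _ t1 =>
      [:: (t1, (p, OCreate T a b, None))]
  | _ => [::]
  end.

(* O_1, ..., O_k: the operations whose linearization point lies in the execution,
   in the order of their linearization points (distinct step indices). *)
Definition lin_seq (c : config) : seq ('I_n * op * option resp) :=
  map snd (sort (fun x y : nat * ('I_n * op * option resp) => x.1 <= y.1)
    ([seq (x.1, (x.2.1, Some x.2.2)) | x <- chist c] ++
     flatten [seq pending p (cloc c p) | p <- enum 'I_n])).

End WeakDescriptors.

From Pilot Require Import Defs.
From mathcomp Require Import all_boot.
Set Implicit Arguments.
Unset Strict Implicit.
Unset Printing Implicit Defensive.

(* Forward simulation against a timeline of abstract states.  Along an
   execution we build [A : nat -> astate], [A t] being the abstract state just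
   before step [t]; [A] changes only at steps where an operation is linearized,
   so the operations sorted by linearization time form a legal sequential
   history starting from [A 0 = ainit].

   The key invariant relates the current abstract state to shared memory: the
   current descriptor of type [T] of process [q] is [<q, seq>] (none while
   [seq = 0]), with [seq] the sequence number of [D_{T,q}], and its fields are
   those stored in [D_{T,q}]; except while a CreateNew of [q] is between its two
   writes of the sequence number, when [seq = oldseq+1] and the abstract
   descriptor is [<q, oldseq+2>], carrying the arguments of the CreateNew.
   Every pointer [<q, s>] returned so far has [0 < s] and [s] at most the
   sequence number given by the last completed CreateNew of [q]; as sequence
   numbers never decrease, the test [seq = s] performed by every operation
   decides validity.  A ReadField returning a field value is linearized at its
   earlier read of the field: if the sequence number is still [s] at its second
   read, it was [s] all along, so the descriptor was valid, with that value, at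
   the time of the field read. *)

Lemma In_cat (X : Type) (s1 s2 : seq X) x :
  List.In x (s1 ++ s2) <-> List.In x s1 \/ List.In x s2.
Proof. by elim: s1 => /= [|y s1 ->]; tauto. Qed.

Lemma In_rcons (X : Type) (s : seq X) x y : List.In y (rcons s x) <-> List.In y s \/ y = x.
Proof. by rewrite -cats1 In_cat /=; intuition. Qed.

Lemma In_flatten (X : Type) (ss : seq (seq X)) x :
  List.In x (flatten ss) -> exists2 s, List.In s ss & List.In x s.
Proof.
elim: ss => //= s ss IH /In_cat [|/IH [s' ? ?]]; first by exists s; auto.
by exists s'; auto.
Qed.

Lemma In_map (X Y : Type) (f : X -> Y) s y :
  List.In y (map f s) -> exists2 x, List.In x s & y = f x.
Proof. by elim: s => //= x s IH [<-|/IH [z ? ->]]; [exists x | exists z]; auto. Qed.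

Lemma In_nth (X : Type) x0 (s : seq X) i : i < size s -> List.In (nth x0 s i) s.
Proof. by elim: s i => //= x s IH [|i] /=; [left | right; apply: IH]. Qed.

Lemma In_sort (X : Type) (r : rel X) s x : List.In x (sort r s) -> List.In x s.
Proof.
case: s => [|x0 s'] //; set s := x0 :: s'.
move=> Hx; have : List.In x (sort r (mkseq (nth x0 s) (size s))) by rewrite mkseq_nth.
rewrite /mkseq sort_map => /(@In_map nat X) [i Hi ->].
apply: In_nth; suff: i \in sort (relpre (nth x0 s) r) (iota 0 (size s)).
  by rewrite mem_sort mem_iota.
by elim: (sort _ _) Hi => //= j js IH [->|/IH]; rewrite inE ?eqxx // => ->; rewrite orbT.
Qed.

Lemma In_map_fst (X : Type) (s : seq (nat * X)) z : List.In z s -> z.1 \in map fst s.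
Proof. by elim: s => //= w s IH [->|/IH]; rewrite inE ?eqxx // => ->; rewrite orbT. Qed.

Lemma map_fst_In (X : Type) (s : seq (nat * X)) t :
  t \in map fst s -> exists2 z, List.In z s & z.1 = t.
Proof.
elim: s => //= z s IH; rewrite inE => /orP [/eqP ->|/IH [w ? ?]]; first by exists z; auto.
by exists w; auto.
Qed.

Lemma stationary_between (X : Type) (A : nat -> X) t0 t1 :
  t0 <= t1 -> (forall t, t0 <= t < t1 -> A t.+1 = A t) -> A t1 = A t0.
Proof.
elim: t1 => [|t1 IH]; first by rewrite leqn0 => /eqP ->.
rewrite leq_eqVlt => /orP [/eqP -> //|Ht] Hstep.
have -> : A t1.+1 = A t1 by apply: Hstep; rewrite -ltnS Ht ltnSn.
by apply: IH => // t /andP [Ht0 Htt]; apply: Hstep; rewrite Ht0 ltnW.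
Qed.

Lemma pmap_uniq_partial (aT rT : eqType) (f : aT -> option rT) s :
  uniq s -> (forall x y u, f x = Some u -> f y = Some u -> x = y) -> uniq (pmap f s).
Proof.
move=> Us Hf; rewrite -(map_inj_uniq (@Some_inj _)) pmapS_filter.
rewrite map_inj_in_uniq ?filter_uniq // => x y; rewrite !mem_filter /=.
by case Ex: (f x) => [u|] // /andP [_ _] _ Exy; apply: Hf Ex _; rewrite -Exy.
Qed.

Section Simulation.
Variables (Ty : eqType) (nimm nmut : Ty -> nat) (V : eqType) (vdef : V) (n : nat).

Local Notation ast := (astate Ty V n).
Local Notation lst := (lstate Ty V n).
Local Notation memory := (Defs.mem Ty V n).
Local Notation history := (seq (hentry Ty V n)).
Local Notation lin_entry := (nat * ('I_n * op Ty V n * option (resp V n)))%type.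

Definition entry_legal (A : nat -> ast) (x : lin_entry) : Prop :=
  exists2 r, spec_step vdef (A x.1) x.2.1.1 x.2.1.2 r (A x.1.+1) &
             forall y, x.2.2 = Some y -> y = r.

Lemma spec_legal_timeline (A : nat -> ast) clk (s : seq lin_entry) t0 :
  sorted ltn (map fst s) ->
  (forall x, List.In x s -> t0 <= x.1 < clk /\ entry_legal A x) ->
  (forall t, t0 <= t < clk -> t \notin map fst s -> A t.+1 = A t) ->
  spec_legal vdef (A t0) (map snd s).
Proof.
elim: s t0 => [|[t1 [[p o] r]] s IH] t0 //= Hsort Hin Hidle.
have [/andP [Ht01 Ht1] [r' Hst Hr]] := Hin _ (or_introl erefl).
have Hlater : all (ltn t1) (map fst s) := order_path_min ltn_trans Hsort.
have EA : A t1 = A t0.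
  apply: (@stationary_between _ A _ _ Ht01) => t /andP [Ht0 Htt]; apply: Hidle.
    by rewrite Ht0 (ltn_trans Htt Ht1).
  rewrite inE negb_or neq_ltn Htt /=; apply: contraL Hlater => Hts.
  by apply/allPn; exists t => //; rewrite -leqNgt ltnW.
exists r', (A t1.+1); rewrite -EA; split => //; split => [y /Hr //|].
apply: IH => [|x Hx|t /andP [Ht Htc] Hts].
- exact: path_sorted Hsort.
- have [/andP [_ ?] ?] := Hin x (or_intror Hx); split => //; apply/andP; split => //.
  exact: (allP Hlater _ (In_map_fst Hx)).
- apply: Hidle; first by rewrite Htc andbT (leq_trans Ht01 (ltnW Ht)).
  by rewrite inE negb_or Hts andbT neq_ltn Ht orbT.
Qed.

Definition seqno (m : memory) T q := (mmut m T q).1.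
Definition mutables (m : memory) T q := (mmut m T q).2.

Definition creating (l : lst) (T : Ty) : option (seq V * seq V * nat) :=
  match l with
  | LCNimm T' a b old _ _ | LCNmut T' a b old _ _ | LCN2 T' a b old _ =>
      if T' == T then Some (a, b, old) else None
  | _ => None
  end.

Definition in_create (l : lst) : bool :=
  match l with
  | LCN0 _ _ _ | LCN1 _ _ _ _ | LCNimm _ _ _ _ _ _ | LCNmut _ _ _ _ _ _ | LCN2 _ _ _ _ _ => true
  | _ => false
  end.

Definition pending_time (l : lst) : option nat :=
  match l with
  | LCNimm _ _ _ _ t _ | LCNmut _ _ _ _ t _ | LCN2 _ _ _ _ t => Some t
  | _ => None
  end.

(* A ReadField is tentatively linearized at its read of the field; this time
   becomes its linearization point only if the sequence number is unchanged. *)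
Definition lin_time (l : lst) : option nat :=
  if l is LRF1 _ _ _ _ _ t then Some t else pending_time l.

Lemma not_in_create (l : lst) :
  ~~ in_create l -> creating l =1 (fun _ => None) /\ pending_time l = None.
Proof. by case: l. Qed.

Definition seq_returned (cl : 'I_n -> lst) m T q :=
  if creating (cl q) T is Some (_, _, old) then old else seqno m T q.
Definition seq_created (cl : 'I_n -> lst) m T q :=
  if creating (cl q) T is Some (_, _, old) then old.+2 else seqno m T q.

Definition stored (c : seq V * seq V) (m : memory) T q :=
  size c.1 = nimm T /\ (forall i, i < nimm T -> nth vdef c.1 i = mimm m T q i) /\
  c.2 = mutables m T q.

Definition descr_inv (m : memory) (S : ast) (cl : 'I_n -> lst) T q :=
  size (mutables m T q) = nmut T /\
  match creating (cl q) T with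
  | Some (a, b, old) => seqno m T q = old.+1 /\ acur S T q = Some (q, old.+2) /\
                        acont S T (q, old.+2) = (a, b)
  | None => (seqno m T q = 0 /\ acur S T q = None) \/
            (0 < seqno m T q /\ acur S T q = Some (q, seqno m T q) /\
             stored (acont S T (q, seqno m T q)) m T q)
  end.

Definition created_bounded (S : ast) m cl :=
  forall T q s, acreated S T (q, s) -> s <= seq_created cl m T q.
Definition returned_bounded (h : history) m cl :=
  forall T q s, returned h T (q, s) -> 0 < s <= seq_returned cl m T q.

Definition create_linearized (A : nat -> ast) N p T a b old t1 :=
  t1 < N /\ spec_step vdef (A t1) p (OCreate n T a b) (RPtr V (p, old.+2)) (A t1.+1).

Definition field_in_range T (f : field) : Prop :=
  match f with FImm i => i < nimm T | FMut j => j < nmut T end.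

Definition local_inv (h : history) (m : memory) (A : nat -> ast) N p (l : lst) : Prop :=
  match l with
  | LIdle => True
  | LCN0 T a b => size a = nimm T /\ size b = nmut T
  | LCN1 T a b old => (size a = nimm T /\ size b = nmut T) /\ old = seqno m T p
  | LCNimm T a b old t1 k =>
      (size a = nimm T /\ size b = nmut T) /\ create_linearized A N p T a b old t1 /\
      (forall i, i < k -> mimm m T p i = nth vdef a i)
  | LCNmut T a b old t1 k =>
      (size a = nimm T /\ size b = nmut T) /\ create_linearized A N p T a b old t1 /\
      (forall i, i < nimm T -> mimm m T p i = nth vdef a i) /\
      (forall i, i < k -> nth vdef (mutables m T p) i = nth vdef b i)
  | LCN2 T a b old t1 =>
      (size a = nimm T /\ size b = nmut T) /\ create_linearized A N p T a b old t1 /\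
      (forall i, i < nimm T -> mimm m T p i = nth vdef a i) /\ mutables m T p = b
  | LRF0 T d f dv => returned h T d /\ field_in_range T f
  | LRF1 T d f dv x t0 => returned h T d /\ field_in_range T f /\ t0 < N /\
      (seqno m T d.1 = d.2 -> avalid (A t0) T d /\ afield vdef (acont (A t0) T d) f = x)
  | LRI T d k acc => returned h T d /\ k <= nimm T /\ size acc = k /\
      (seqno m T d.1 = d.2 -> forall i, i < k -> nth vdef acc i = mimm m T d.1 i)
  | LWF0 T d j v => returned h T d /\ j < nmut T
  | LWF1 T d j v w => returned h T d /\ j < nmut T /\ w.1 = d.2
  | LCS0 T d j e w => returned h T d /\ j < nmut T
  | LCS1 T d j e w x => returned h T d /\ j < nmut T /\ x.1 = d.2 /\ nth vdef x.2 j = e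
  end.

Record timeline_inv (c : config Ty V n) (A : nat -> ast) : Prop := {
  tl_init : A 0 = ainit Ty V n;
  tl_idle : forall t, t < cclk c -> t \notin map fst (chist c) ->
    (forall p, pending_time (cloc c p) <> Some t) -> A t.+1 = A t;
  tl_hist : forall x, List.In x (chist c) -> x.1 < cclk c /\
    spec_step vdef (A x.1) x.2.1.1 x.2.1.2 x.2.2 (A x.1.+1);
  tl_hist_uniq : uniq (map fst (chist c));
  tl_lin_lt : forall p t, lin_time (cloc c p) = Some t -> t < cclk c;
  tl_lin_fresh : forall p t, lin_time (cloc c p) = Some t -> t \notin map fst (chist c);
  tl_lin_uniq : forall p p' t,
    lin_time (cloc c p) = Some t -> lin_time (cloc c p') = Some t -> p = p'
}.

Record sim_inv (c : config Ty V n) (A : nat -> ast) : Prop := {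
  inv_timeline : timeline_inv c A;
  inv_descr : forall T q, descr_inv (cmem c) (A (cclk c)) (cloc c) T q;
  inv_created : created_bounded (A (cclk c)) (cmem c) (cloc c);
  inv_returned : returned_bounded (chist c) (cmem c) (cloc c);
  inv_local : forall p, local_inv (chist c) (cmem c) A (cclk c) p (cloc c p)
}.

Lemma pending_time_lin (l : lst) t : pending_time l = Some t -> lin_time l = Some t.
Proof. by case: l. Qed.

Lemma map_fst_pending (cl : 'I_n -> lst) (ps : seq 'I_n) :
  map fst (flatten [seq pending p (cl p) | p <- ps]) = pmap (fun p => pending_time (cl p)) ps.
Proof. by elim: ps => //= p ps IH; rewrite map_cat IH; case: (cl p). Qed.

Lemma pending_legal h m A N p (l : lst) x :
  local_inv h m A N p l -> List.In x (pending p l) -> x.1 < N /\ entry_legal A x.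
Proof.
case: l => //= [T a b old t1 k|T a b old t1 k|T a b old t1] [_ [[Ht Hs] _]] [<-|//];
  by split => //; exists (RPtr V (p, old.+2)) => // y.
Qed.

Lemma sim_inv_lin_seq_legal c A : sim_inv c A -> spec_legal vdef (ainit Ty V n) (lin_seq c).
Proof.
case=> -[Hinit Hidle Hhist Huniq _ Hfresh Hluniq] _ _ _ Hloc.
rewrite /lin_seq -Hinit; set E := (_ ++ _).
have Etimes : map fst E =
    map fst (chist c) ++ pmap (fun p => pending_time (cloc c p)) (enum 'I_n).
  by rewrite map_cat -map_comp map_fst_pending.
have Esort : map fst (sort (fun x y : lin_entry => x.1 <= y.1) E) = sort leq (map fst E).
  by rewrite sort_map.
apply: (spec_legal_timeline (clk := cclk c)).
- rewrite Esort ltn_sorted_uniq_leq sort_uniq (sort_sorted leq_total) andbT.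
  have Hpuniq : uniq (pmap (fun p => pending_time (cloc c p)) (enum 'I_n)).
    apply: pmap_uniq_partial (enum_uniq _) _ => p p' t /pending_time_lin H1.
    by move/pending_time_lin; apply: Hluniq H1.
  rewrite Etimes cat_uniq Huniq Hpuniq andbT /=.
  apply/hasPn => t; rewrite mem_pmap => /mapP [p _ Ep].
  exact: Hfresh p t (pending_time_lin (esym Ep)).
- move=> x Hx; case/In_cat: (In_sort Hx) => [Hh|Hp].
    have [y Hy ->] := In_map Hh; have [Hyt Hsp] := Hhist y Hy.
    by split => //; exists y.2.2 => // ? [->].
  have [s Hs Hpx] := In_flatten Hp; have [p _ Es] := In_map Hs; subst s.
  by have [? ?] := pending_legal (Hloc p) Hpx.
- move=> t /andP [_ Ht]; rewrite Esort mem_sort Etimes mem_cat negb_or => /andP [Hh Hp].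
  apply: Hidle => // p Ep; move/negP: Hp; apply; rewrite mem_pmap.
  by apply/mapP; exists p; rewrite ?mem_enum.
Qed.

Definition timeline_upd (A : nat -> ast) N (S : ast) t := if t <= N then A t else S.

Lemma timeline_upd_le A N S t : t <= N -> timeline_upd A N S t = A t.
Proof. by rewrite /timeline_upd => ->. Qed.

Lemma timeline_upd_gt A N S t : N < t -> timeline_upd A N S t = S.
Proof. by rewrite /timeline_upd ltnNge => /negbTE ->. Qed.

Lemma updE (X : eqType) (Y : Type) (f : X -> Y) a b x :
  upd f a b x = if x == a then b else f x.
Proof. by []. Qed.

Lemma hist_time_lt c A t : timeline_inv c A -> t \in map fst (chist c) -> t < cclk c.
Proof. by move=> H /map_fst_In [x /(tl_hist H) [? _] <-]. Qed.

Inductive lin_step (c : config Ty V n) (A : nat -> ast) (p : 'I_n) (l' : lst) :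
    history -> ast -> Prop :=
| LinSilent :
    lin_time l' = lin_time (cloc c p) -> pending_time l' = pending_time (cloc c p) ->
    lin_step c A p l' (chist c) (A (cclk c))
| LinNow S :
    lin_time (cloc c p) = None -> lin_time l' = Some (cclk c) ->
    (pending_time l' = Some (cclk c) \/ S = A (cclk c)) ->
    lin_step c A p l' (chist c) S
| LinReturnNow x S :
    pending_time (cloc c p) = None -> lin_time l' = None ->
    spec_step vdef (A (cclk c)) x.1.1 x.1.2 x.2 S ->
    lin_step c A p l' (rcons (chist c) (cclk c, x)) S
| LinReturnEarlier t x :
    lin_time (cloc c p) = Some t -> lin_time l' = None ->
    spec_step vdef (A t) x.1.1 x.1.2 x.2 (A t.+1) ->
    lin_step c A p l' (rcons (chist c) (t, x)) (A (cclk c)).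

Section TimelineStep.
Variables (c : config Ty V n) (A : nat -> ast) (p : 'I_n) (l' : lst).
Variables (h' : history) (S : ast).
Hypotheses (Htl : timeline_inv c A) (Hstep : lin_step c A p l' h' S).

Local Notation N := (cclk c).
Local Notation A' := (timeline_upd A N S).
Local Notation cl' := (upd (cloc c) p l').

Lemma lin_step_new_lin t : lin_time l' = Some t ->
  h' = chist c /\ (lin_time (cloc c p) = Some t \/ lin_time (cloc c p) = None /\ t = N).
Proof. by case: Hstep => [-> _|S0 -> -> _ [<-]|x S0 _ ->|t' x _ ->]; auto. Qed.

Lemma lin_step_idle t : t < N.+1 -> t \notin map fst h' ->
  (forall q, pending_time (cl' q) <> Some t) -> A' t.+1 = A' t.
Proof.
rewrite ltnS leq_eqVlt => /orP Ht Hth Hpt; have Hp := Hpt p; rewrite updE eqxx in Hp.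
case: Ht => [/eqP Et|Ht].
  subst t; rewrite timeline_upd_gt // timeline_upd_le //.
  case: Hstep Hth Hp => // [S0 _ _ [-> _ //|-> //]|x S0 _ _ _].
  by rewrite map_rcons mem_rcons inE eqxx.
rewrite !timeline_upd_le ?(ltnW Ht) //; apply: (tl_idle Htl) => //.
  apply: contra Hth => Hh.
  by case: Hstep => // *; rewrite map_rcons mem_rcons inE Hh orbT.
move=> q Hq; case: (eqVneq q p) => [Eq|Nq]; last first.
  by have := Hpt q; rewrite updE (negbTE Nq).
subst q; have Hl := pending_time_lin Hq.
case: Hstep Hth Hp => [_ -> _|S0|x S0|t' x].
- by rewrite Hq.
- by rewrite Hl.
- by rewrite Hq.
- by rewrite Hl => -[<-] _ _; rewrite map_rcons mem_rcons inE eqxx.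
Qed.

Lemma lin_step_hist x : List.In x h' ->
  x.1 < N.+1 /\ spec_step vdef (A' x.1) x.2.1.1 x.2.1.2 x.2.2 (A' x.1.+1).
Proof.
have Hold S0 y : List.In y (chist c) -> y.1 < N.+1 /\
    spec_step vdef (timeline_upd A N S0 y.1) y.2.1.1 y.2.1.2 y.2.2 (timeline_upd A N S0 y.1.+1).
  by case/(tl_hist Htl) => Hy Hs; rewrite !timeline_upd_le // ltnW.
case: Hstep x => [_ _|S0 _ _ _|y S0 _ _ Hs|t y Hl _ Hs] x; [exact: Hold|exact: Hold| |].
  case/In_rcons => [/Hold //|->] /=.
  by rewrite (timeline_upd_gt _ _ (ltnSn N)) timeline_upd_le.
case/In_rcons => [/Hold //|->] /=; have Ht := tl_lin_lt Htl Hl.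
by rewrite !timeline_upd_le // ltnW.
Qed.

Lemma lin_step_hist_uniq : uniq (map fst h').
Proof.
have Hu := tl_hist_uniq Htl.
case: Hstep => [_ _ //|S0 _ _ _ //|x S0 _ _ _|t x Hl _ _].
  by rewrite map_rcons rcons_uniq Hu andbT; apply/negP => /(hist_time_lt Htl); rewrite ltnn.
by rewrite map_rcons rcons_uniq Hu andbT; apply: tl_lin_fresh Htl _ _ Hl.
Qed.

Lemma lin_step_lin_lt q t : lin_time (cl' q) = Some t -> t < N.+1.
Proof.
rewrite updE; case: (eqVneq q p) => [_|_ /(tl_lin_lt Htl) /ltnW //].
by case/lin_step_new_lin => _ [/(tl_lin_lt Htl) /ltnW|[_ ->]].
Qed.

Lemma lin_step_lin_fresh q t : lin_time (cl' q) = Some t -> t \notin map fst h'.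
Proof.
rewrite updE; case: (eqVneq q p) => [_|Nq Hq].
  case/lin_step_new_lin => -> [/(tl_lin_fresh Htl) //|[_ ->]].
  by apply/negP => /(hist_time_lt Htl); rewrite ltnn.
have Hf := tl_lin_fresh Htl Hq.
case: Hstep => [_ _|S0 _ _ _|x S0 _ _ _|t' x Hl _ _]; [exact: Hf|exact: Hf| |].
  by rewrite map_rcons mem_rcons inE negb_or Hf neq_ltn (tl_lin_lt Htl Hq).
rewrite map_rcons mem_rcons inE negb_or Hf andbT.
by apply/eqP => E; move/eqP: Nq; apply; apply: (tl_lin_uniq Htl Hq); rewrite E.
Qed.

Lemma lin_step_lin_uniq q q' t :
  lin_time (cl' q) = Some t -> lin_time (cl' q') = Some t -> q = q'.
Proof.
have Hone r u : r != p -> lin_time l' = Some u -> lin_time (cloc c r) = Some u -> False.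
  move=> Nr /lin_step_new_lin [_ [Hp|[_ ->]]] Hr.
    by move/eqP: Nr; apply; apply: (tl_lin_uniq Htl) Hr Hp.
  by have := tl_lin_lt Htl Hr; rewrite ltnn.
rewrite !updE; case: (eqVneq q p) => [->|Nq]; case: (eqVneq q' p) => [->|Nq'] // H1 H2.
- by case: (Hone _ _ Nq' H1 H2).
- by case: (Hone _ _ Nq H2 H1).
- exact: (tl_lin_uniq Htl H1 H2).
Qed.

Lemma timeline_step m' : timeline_inv (Config m' cl' N.+1 h') A'.
Proof.
split => /=.
- by rewrite timeline_upd_le // (tl_init Htl).
- exact: lin_step_idle.
- exact: lin_step_hist.
- exact: lin_step_hist_uniq.
- exact: lin_step_lin_lt.
- exact: lin_step_lin_fresh.
- exact: lin_step_lin_uniq.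
Qed.

End TimelineStep.

Lemma mmut_set_mut (m : memory) T p w T' q :
  mmut (set_mut m T p w) T' q = if (T' == T) && (q == p) then w else mmut m T' q.
Proof. by rewrite /set_mut /upd /=; case: (eqVneq T' T) => [->|]. Qed.

Lemma mmut_set_mut_other (m : memory) T p w T' q :
  (T' != T) || (q != p) -> mmut (set_mut m T p w) T' q = mmut m T' q.
Proof. by rewrite mmut_set_mut; case: (T' == T); case: (q == p). Qed.

Lemma mimm_set_imm (m : memory) T p k v T' q i :
  mimm (set_imm m T p k v) T' q i =
  if [&& T' == T, q == p & i == k] then v else mimm m T' q i.
Proof.
by rewrite /set_imm /upd /=; case: (eqVneq T' T) => [->|] //=; case: (eqVneq q p) => [->|].
Qed.

Lemma mimm_set_imm_other (m : memory) T p k v T' q :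
  (T' != T) || (q != p) -> mimm (set_imm m T p k v) T' q = mimm m T' q.
Proof. by rewrite /set_imm /upd /=; case: (eqVneq T' T) => [->|] //= /negbTE ->. Qed.

Lemma size_set_nth_lt (s : seq V) j v : j < size s -> size (set_nth vdef s j v) = size s.
Proof. by move=> Hj; rewrite size_set_nth; apply/maxn_idPr. Qed.

Lemma create_linearized_upd A N S p T a b old t1 :
  create_linearized A N p T a b old t1 ->
  create_linearized (timeline_upd A N S) N.+1 p T a b old t1.
Proof. by case=> Ht Hs; split; [exact: ltnW | rewrite !timeline_upd_le // ltnW]. Qed.

(* The last hypothesis: the step makes no returned pointer valid again and
   does not alter the immutable fields of a valid one. *)
Lemma local_inv_frame h h' m m' A N S q (l : lst) :
  local_inv h m A N q l ->
  (forall T d, returned h T d -> returned h' T d) ->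
  (forall T, seqno m' T q = seqno m T q) ->
  (forall T, creating l T <> None ->
     mimm m' T q = mimm m T q /\ mutables m' T q = mutables m T q) ->
  (forall T q0 s, returned h T (q0, s) -> seqno m' T q0 = s ->
     seqno m T q0 = s /\ mimm m' T q0 = mimm m T q0) ->
  local_inv h' m' (timeline_upd A N S) N.+1 q l.
Proof.
move=> Hl Hret Hseq Hown Hsame; case: l Hl Hown => //=.
- by move=> T a b old [Hs ->]; rewrite Hseq.
- move=> T a b old t1 k [Hs [Hc Hi]] /(_ T); rewrite eqxx => -[//|Hm _].
  by split => //; split; [exact: create_linearized_upd | move=> i /Hi; rewrite Hm].
- move=> T a b old t1 k [Hs [Hc [Hi Hj]]] /(_ T); rewrite eqxx => -[//|Hm Hv].
  by split => //; split; [exact: create_linearized_upd | rewrite Hm Hv].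
- move=> T a b old t1 [Hs [Hc [Hi Hj]]] /(_ T); rewrite eqxx => -[//|Hm Hv].
  by split => //; split; [exact: create_linearized_upd | rewrite Hm Hv].
- by move=> T d f dv [Hr Hf]; split => //; apply: Hret.
- move=> T [q' s] f dv x t0 [Hr [Hf [Ht Hv]]] _; split; first exact: Hret.
  do 2 split => //; first exact: ltnW.
  move=> /= Hs; have [Hs' _] := Hsame _ _ _ Hr Hs.
  by rewrite timeline_upd_le ?(ltnW Ht) //; apply: Hv.
- move=> T [q' s] k acc [Hr [Hk [Hsz Hv]]] _; split; first exact: Hret.
  do 2 split => //; move=> /= Hs; have [Hs' Hm] := Hsame _ _ _ Hr Hs.
  by rewrite Hm; apply: Hv.
- by move=> T d j v [Hr Hj]; split => //; apply: Hret.
- by move=> T d j v w [Hr Hj] _; split => //; apply: Hret.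
- by move=> T d j e w [Hr Hj] _; split => //; apply: Hret.
- by move=> T d j e w x [Hr Hj] _; split => //; apply: Hret.
Qed.

Section Validity.
Variables (m : memory) (S : ast) (cl : 'I_n -> lst).
Hypothesis Hdescr : forall T q, descr_inv m S cl T q.

Lemma avalid_acur T q s : avalid S T (q, s) <-> acur S T q = Some (q, s).
Proof.
split; last by exists q.
case=> p Hp; suff Epq : p = q by subst p.
have [_] := Hdescr T p; rewrite Hp.
by case: (creating (cl p) T) => [[[a b] old] [_ [[-> _] _]]|[[_ //]|[_ [[-> _] _]]]].
Qed.

Lemma seqno_valid T q s : 0 < s <= seq_returned cl m T q -> seqno m T q = s ->
  [/\ creating (cl q) T = None, avalid S T (q, s) & stored (acont S T (q, s)) m T q].
Proof.
move=> /andP [Hs0 Hsd] Hsig; have [_] := Hdescr T q.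
move: Hsd; rewrite /seq_returned; case: (creating (cl q) T) => [[[a b] old]|] Hsd.
  by move=> [Hso _]; move: Hsd; rewrite -Hsig Hso ltnn.
case=> [[Hz _]|[_ [Hc Hg]]]; first by move: Hs0; rewrite -Hsig Hz.
by split => //; [apply/avalid_acur; rewrite Hc Hsig | rewrite -Hsig].
Qed.

Lemma seqno_invalid T q s : 0 < s <= seq_returned cl m T q -> seqno m T q <> s ->
  ~ avalid S T (q, s).
Proof.
move=> /andP [Hs0 Hsd] Hsig /avalid_acur Hc; have [_] := Hdescr T q.
move: Hsd; rewrite /seq_returned; case: (creating (cl q) T) => [[[a b] old]|] Hsd.
  by move=> [_ [Hc' _]]; move: Hc Hsd; rewrite Hc' => -[<-]; rewrite ltnNge leqnSn.
case=> [[_ Hz]|[_ [Hc' _]]]; first by rewrite Hz in Hc.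
by move: Hc; rewrite Hc' => -[E].
Qed.

End Validity.

Lemma returned_rcons (h : history) x T d : returned h T d -> returned (rcons h x) T d.
Proof. by case=> t [p [a [b H]]]; exists t, p, a, b; apply/In_rcons; left. Qed.

Lemma returned_rcons_inv (h : history) x T d : returned (rcons h x) T d ->
  returned h T d \/ exists t p a b, x = (t, (p, OCreate n T a b, RPtr V d)).
Proof.
case=> t [p [a [b /In_rcons [H|H]]]]; first by left; exists t, p, a, b.
by right; exists t, p, a, b.
Qed.

Lemma sim_inv_init init_imm init_mut :
  (forall T p, size (init_mut T p) = nmut T) ->
  sim_inv (init_config init_imm init_mut) (fun _ => ainit Ty V n).
Proof.
move=> Hinit; split => //=.
- move=> T q; split; first by rewrite /mutables /= Hinit.
  by left.
- by move=> T q s [t [p [a [b []]]]].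
Qed.

Lemma sim_inv_step c A p (l' : lst) m' h' S :
  sim_inv c A -> lin_step c A p l' h' S ->
  (forall T q, descr_inv m' S (upd (cloc c) p l') T q) ->
  created_bounded S m' (upd (cloc c) p l') ->
  returned_bounded h' m' (upd (cloc c) p l') ->
  (forall q, local_inv h' m' (timeline_upd A (cclk c) S) (cclk c).+1 q (upd (cloc c) p l' q)) ->
  exists A', sim_inv (Config m' (upd (cloc c) p l') (cclk c).+1 h') A'.
Proof.
move=> H Hs Hd Hc Hr Hl; exists (timeline_upd A (cclk c) S).
have ES : timeline_upd A (cclk c) S (cclk c).+1 = S by rewrite timeline_upd_gt.
by split; rewrite /= ?ES //; apply: timeline_step (inv_timeline H) Hs m'.
Qed.

Definition mem_frame (h : history) (m m' : memory) (cl : 'I_n -> lst) p :=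
  forall q, q != p ->
  [/\ forall T, seqno m' T q = seqno m T q,
      forall T, creating (cl q) T <> None ->
        mimm m' T q = mimm m T q /\ mutables m' T q = mutables m T q &
      forall T q0 s, returned h T (q0, s) -> seqno m' T q0 = s ->
        seqno m T q0 = s /\ mimm m' T q0 = mimm m T q0].

Lemma local_inv_upd c A p (l' : lst) m' h' S :
  sim_inv c A -> mem_frame (chist c) (cmem c) m' (cloc c) p ->
  (forall T d, returned (chist c) T d -> returned h' T d) ->
  local_inv h' m' (timeline_upd A (cclk c) S) (cclk c).+1 p l' ->
  forall q, local_inv h' m' (timeline_upd A (cclk c) S) (cclk c).+1 q (upd (cloc c) p l' q).
Proof.
move=> H Hf Hret Hown q; rewrite updE; case: (eqVneq q p) => [->|Nq] //.
by have [F1 F2 F3] := Hf q Nq; apply: local_inv_frame (inv_local H q) Hret F1 F2 F3.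
Qed.

Definition same_creating (l l' : lst) := forall T, creating l' T = creating l T.

Lemma creating_upd (cl : 'I_n -> lst) p l' : same_creating (cl p) l' ->
  forall q T, creating (upd cl p l' q) T = creating (cl q) T.
Proof. by move=> H q T; rewrite updE; case: (eqVneq q p) => [->|]. Qed.

Lemma descr_inv_frame m m' S S' cl cl' T q :
  descr_inv m S cl T q -> creating (cl' q) T = creating (cl q) T ->
  mmut m' T q = mmut m T q -> (creating (cl q) T = None -> mimm m' T q = mimm m T q) ->
  acur S' T q = acur S T q -> (forall s, acont S' T (q, s) = acont S T (q, s)) ->
  descr_inv m' S' cl' T q.
Proof.
move=> + Hc Hm Hi Ha Ho; rewrite /descr_inv /stored /seqno /mutables Hc Hm Ha.
by case: (creating (cl q) T) Hi => [[[a b] old]|] Hi; rewrite ?Ho ?Hi.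
Qed.

Lemma created_bounded_eq S m m' cl cl' :
  (forall T q, seq_created cl' m' T q = seq_created cl m T q) ->
  created_bounded S m cl -> created_bounded S m' cl'.
Proof. by move=> H Hc T q s; rewrite H; apply: Hc. Qed.

Lemma returned_bounded_eq (h h' : history) m m' cl cl' :
  (forall T q, seq_returned cl' m' T q = seq_returned cl m T q) ->
  (forall T d, returned h' T d -> returned h T d) ->
  returned_bounded h m cl -> returned_bounded h' m' cl'.
Proof. by move=> H Hr Hc T q s /Hr; rewrite H; apply: Hc. Qed.

Lemma local_step_inv c A p (l' : lst) m' :
  sim_inv c A -> lin_step c A p l' (chist c) (A (cclk c)) -> same_creating (cloc c p) l' ->
  (forall T q, seqno m' T q = seqno (cmem c) T q) ->
  (forall T q, descr_inv m' (A (cclk c)) (upd (cloc c) p l') T q) ->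
  mem_frame (chist c) (cmem c) m' (cloc c) p ->
  local_inv (chist c) m' (timeline_upd A (cclk c) (A (cclk c))) (cclk c).+1 p l' ->
  exists A', sim_inv (Config m' (upd (cloc c) p l') (cclk c).+1 (chist c)) A'.
Proof.
move=> H Hs Hcn Hseq Hd Hf Hl; have Hcu := creating_upd Hcn.
apply: sim_inv_step Hs Hd _ _ _ => //.
- by apply: created_bounded_eq (inv_created H) => T q; rewrite /seq_created Hcu Hseq.
- by apply: returned_bounded_eq (inv_returned H) => // T q; rewrite /seq_returned Hcu Hseq.
- exact: local_inv_upd H Hf _ Hl.
Qed.

Lemma silent_step_inv c A p (l' : lst) :
  sim_inv c A -> lin_step c A p l' (chist c) (A (cclk c)) -> same_creating (cloc c p) l' ->
  local_inv (chist c) (cmem c) (timeline_upd A (cclk c) (A (cclk c))) (cclk c).+1 p l' ->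
  exists A', sim_inv (Config (cmem c) (upd (cloc c) p l') (cclk c).+1 (chist c)) A'.
Proof.
move=> H Hs Hcn; have Hcu := creating_upd Hcn.
apply: local_step_inv Hs Hcn _ _ _ => //.
by move=> T q; apply: descr_inv_frame (inv_descr H T q) (Hcu q T) _ _ _ _.
Qed.

Lemma return_readonly_inv c A p (e : hentry Ty V n) :
  sim_inv c A -> ~~ in_create (cloc c p) -> (forall T a b, e.2.1.2 <> OCreate n T a b) ->
  lin_step c A p (LIdle Ty V n) (rcons (chist c) e) (A (cclk c)) ->
  exists A', sim_inv (Config (cmem c) (upd (cloc c) p (LIdle Ty V n)) (cclk c).+1
                             (rcons (chist c) e)) A'.
Proof.
move=> H /not_in_create [Hcn _] Ho Hls.
have Hcu := @creating_upd (cloc c) p (LIdle Ty V n) (fun T => esym (Hcn T)).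
have Hret T d : returned (rcons (chist c) e) T d -> returned (chist c) T d.
  by case/returned_rcons_inv => // -[t [q [a [b Ee]]]]; case: (Ho T a b); rewrite Ee.
apply: (sim_inv_step H Hls).
- by move=> T q; apply: descr_inv_frame (inv_descr H T q) _ _ _ _ _.
- by apply: created_bounded_eq (inv_created H) => T q; rewrite /seq_created Hcu.
- by apply: returned_bounded_eq Hret (inv_returned H) => T q; rewrite /seq_returned Hcu.
- by apply: (local_inv_upd H) => // T d; apply: returned_rcons.
Qed.

Lemma return_now_inv c A p o r :
  sim_inv c A -> ~~ in_create (cloc c p) -> (forall T a b, o <> OCreate n T a b) ->
  spec_step vdef (A (cclk c)) p o r (A (cclk c)) ->
  exists A', sim_inv (Config (cmem c) (upd (cloc c) p (LIdle Ty V n)) (cclk c).+1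
                             (rcons (chist c) (cclk c, (p, o, r)))) A'.
Proof.
move=> H Hcr Ho Hs; apply: (@return_readonly_inv c A p (cclk c, (p, o, r)) H Hcr Ho).
by apply: LinReturnNow => //; case: (not_in_create Hcr).
Qed.

Definition acreate (S : ast) T p (d : ptr n) a b : ast :=
  AState (upd (acreated S) T (upd (acreated S T) d true))
         (upd (acont S) T (upd (acont S T) d (a, b)))
         (upd (acur S) T (upd (acur S T) p (Some d))).

Lemma acur_acreate S T p d a b T' q :
  acur (acreate S T p d a b) T' q = if (T' == T) && (q == p) then Some d else acur S T' q.
Proof. by rewrite /acreate /upd /=; case: (eqVneq T' T) => [->|]. Qed.

Lemma acont_acreate S T p d a b T' d' :
  acont (acreate S T p d a b) T' d' = if (T' == T) && (d' == d) then (a, b) else acont S T' d'.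
Proof. by rewrite /acreate /upd /=; case: (eqVneq T' T) => [->|]. Qed.

Lemma acreated_acreate S T p d a b T' d' :
  acreated (acreate S T p d a b) T' d' = ((T' == T) && (d' == d)) || acreated S T' d'.
Proof. by rewrite /acreate /upd /=; case: (eqVneq T' T) => [->|] //=; case: (d' == d). Qed.

Lemma acont_aset_mut (S : ast) T d j v T' d' :
  acont (aset_mut vdef S T d j v) T' d' =
  if (T' == T) && (d' == d) then ((acont S T d).1, set_nth vdef (acont S T d).2 j v)
  else acont S T' d'.
Proof. by rewrite /aset_mut /upd /=; case: (eqVneq T' T) => [->|]. Qed.

Lemma creating_upd_other (cl : 'I_n -> lst) p (l' : lst) T :
  (forall T', T' != T -> creating l' T' = creating (cl p) T') ->
  forall T' q, ~~ ((T' == T) && (q == p)) -> creating (upd cl p l' q) T' = creating (cl q) T'.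
Proof.
move=> Hl' T' q; rewrite updE; case: (eqVneq q p) => [->|//]; rewrite andbT.
exact: Hl'.
Qed.

Lemma mem_frame_set_mut c A p T q w :
  sim_inv c A ->
  (w.1 = seqno (cmem c) T q \/ seq_returned (cloc c) (cmem c) T q < w.1) ->
  (q != p -> w.1 = seqno (cmem c) T q /\ creating (cloc c q) T = None) ->
  mem_frame (chist c) (cmem c) (set_mut (cmem c) T q w) (cloc c) p.
Proof.
move=> H Hw Hother r Nr; split.
- move=> T'; rewrite /seqno mmut_set_mut.
  by case: ifP => // /andP [/eqP -> /eqP Erq]; subst r; case: (Hother Nr).
- move=> T' Hc; split => //; rewrite /mutables mmut_set_mut.
  by case: ifP => // /andP [/eqP ET /eqP Erq]; subst; case: (Hother Nr).
move=> T' q0 s Hr; rewrite /seqno mmut_set_mut; case: ifP => [|_ ->] //.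
case/andP => /eqP ET /eqP Eq0 Hs; subst T' q0; split => //.
case: Hw => [Ew|]; first by rewrite -Hs Ew.
by rewrite Hs ltnNge; case/andP: (inv_returned H Hr) => _ ->.
Qed.

Lemma create_lin_inv c A p T a b old :
  sim_inv c A -> cloc c p = LCN1 n T a b old ->
  exists A', sim_inv (Config (set_mut (cmem c) T p (old.+1, (mmut (cmem c) T p).2))
                  (upd (cloc c) p (LCNimm n T a b old (cclk c) 0)) (cclk c).+1 (chist c)) A'.
Proof.
move=> H Hl; have := inv_local H p; rewrite Hl => -[Hsz Hold].
set N := cclk c; set S := acreate (A N) T p (p, old.+2) a b.
set m' := set_mut _ _ _ _; set l' := LCNimm n T a b old N 0.
have Hsp : spec_step vdef (A N) p (OCreate n T a b) (RPtr V (p, old.+2)) S.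
  apply: SCreate; apply/negP => /(inv_created H).
  by rewrite /seq_created Hl /= -Hold ltnNge leqnSn.
have Hcn T' q : ~~ ((T' == T) && (q == p)) ->
    creating (upd (cloc c) p l' q) T' = creating (cloc c q) T'.
  by apply: creating_upd_other => T0 HT; rewrite Hl /l' /= eq_sym (negbTE HT).
have Hmo T' q : ~~ ((T' == T) && (q == p)) -> mmut m' T' q = mmut (cmem c) T' q.
  by rewrite /m' mmut_set_mut => /negbTE ->.
have Hls : lin_step c A p l' (chist c) S by apply: LinNow; rewrite ?Hl //; left.
apply: (sim_inv_step H Hls).
- move=> T' q; case: (boolP ((T' == T) && (q == p))) => Htp; last first.
    apply: descr_inv_frame (inv_descr H T' q) (Hcn _ _ Htp) (Hmo _ _ Htp) _ _ _ => //.
      by rewrite /S acur_acreate (negbTE Htp).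
    move=> s; rewrite /S acont_acreate; case: (T' == T) Htp => //= Htp.
    by rewrite xpair_eqE (negbTE Htp).
  case/andP: Htp => /eqP -> /eqP ->; have [Hsize _] := inv_descr H T p.
  rewrite /descr_inv updE eqxx /l' /= eqxx /seqno /mutables /m' mmut_set_mut !eqxx /=.
  by rewrite /upd !eqxx.
- move=> T' q s; rewrite /S acreated_acreate => /orP [/andP [/eqP -> /eqP [-> ->]]|].
    by rewrite /seq_created updE eqxx /l' /= eqxx.
  move=> /(inv_created H); rewrite /seq_created.
  case: (boolP ((T' == T) && (q == p))) => Htp; last by rewrite Hcn // /seqno Hmo.
  case/andP: Htp => /eqP -> /eqP ->; rewrite updE eqxx Hl /l' /= eqxx -Hold.
  by move=> Hs; apply: leq_trans Hs (leqW (leqnSn _)).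
- move=> T' q s /(inv_returned H); rewrite /seq_returned.
  case: (boolP ((T' == T) && (q == p))) => Htp; last by rewrite Hcn // /seqno Hmo.
  by case/andP: Htp => /eqP -> /eqP ->; rewrite updE eqxx Hl /l' /= eqxx -Hold.
- apply: (local_inv_upd H) => //.
    apply: (mem_frame_set_mut H (or_intror _)); last by rewrite eqxx.
    by rewrite /seq_returned Hl /= -Hold.
  split => //; split => //; split; first exact: ltnSn.
  by rewrite timeline_upd_le // timeline_upd_gt.
Qed.

Lemma create_imm_inv c A p T a b old t1 k :
  sim_inv c A -> cloc c p = LCNimm n T a b old t1 k -> k < nimm T ->
  exists A', sim_inv (Config (set_imm (cmem c) T p k (nth vdef a k))
                 (upd (cloc c) p (LCNimm n T a b old t1 k.+1)) (cclk c).+1 (chist c)) A'.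
Proof.
move=> H Hl Hk; have := inv_local H p; rewrite Hl => -[Hsz [Hok Hi]].
have := inv_descr H T p; rewrite /descr_inv Hl /= eqxx => -[_ [Hseq _]].
have Hcs : same_creating (cloc c p) (LCNimm n T a b old t1 k.+1) by rewrite Hl.
have Hls : lin_step c A p (LCNimm n T a b old t1 k.+1) (chist c) (A (cclk c)).
  by apply: LinSilent; rewrite Hl.
apply: (local_step_inv H Hls Hcs) => //.
- move=> T' q; case: (boolP ((T' != T) || (q != p))) => Ho.
    apply: descr_inv_frame (inv_descr H T' q) (creating_upd Hcs q T') _ _ _ _ => //.
    by move=> _; rewrite mimm_set_imm_other.
  move: Ho; rewrite negb_or !negbK => /andP [/eqP -> /eqP ->].
  by move: (inv_descr H T p); rewrite /descr_inv updE eqxx Hl /= eqxx.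
- move=> q Nq; split => // [T' _|T' q0 s Hr Hs]; first by rewrite mimm_set_imm_other // Nq orbT.
  split => //; case: (boolP ((T' != T) || (q0 != p))) => Ho; first by rewrite mimm_set_imm_other.
  move: Ho Hs Hr; rewrite negb_or !negbK => /andP [/eqP -> /eqP ->] Hs /(inv_returned H).
  have Hs' : seqno (cmem c) T p = s by rewrite -Hs.
  by rewrite /seq_returned Hl /= eqxx -Hs' Hseq ltnn andbF.
- split => //; split; first exact: create_linearized_upd.
  move=> i; rewrite ltnS leq_eqVlt mimm_set_imm !eqxx /= => /orP [/eqP ->|Hik].
    by rewrite eqxx.
  by rewrite (ltn_eqF Hik); apply: Hi.
Qed.

Lemma create_mut_inv c A p T a b old t1 k :
  sim_inv c A -> cloc c p = LCNmut n T a b old t1 k -> k < nmut T ->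
  exists A', sim_inv (Config (set_mut (cmem c) T p ((mmut (cmem c) T p).1,
                        set_nth vdef (mmut (cmem c) T p).2 k (nth vdef b k)))
                 (upd (cloc c) p (LCNmut n T a b old t1 k.+1)) (cclk c).+1 (chist c)) A'.
Proof.
move=> H Hl Hk; have := inv_local H p; rewrite Hl => -[Hsz [Hok [Hi Hj]]].
have := inv_descr H T p; rewrite /descr_inv Hl /= eqxx => -[Hsize [Hseq _]].
have Hcs : same_creating (cloc c p) (LCNmut n T a b old t1 k.+1) by rewrite Hl.
have Hls : lin_step c A p (LCNmut n T a b old t1 k.+1) (chist c) (A (cclk c)).
  by apply: LinSilent; rewrite Hl.
set m' := set_mut _ _ _ _.
have Hseq' T' q : seqno m' T' q = seqno (cmem c) T' q.
  by rewrite /seqno /m' mmut_set_mut; case: ifP => // /andP [/eqP -> /eqP ->].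
have Hmv : mutables m' T p = set_nth vdef (mutables (cmem c) T p) k (nth vdef b k).
  by rewrite /mutables /m' mmut_set_mut !eqxx.
have Hkk : k < size (mutables (cmem c) T p) by rewrite Hsize.
apply: (local_step_inv H Hls Hcs) => //.
- move=> T' q; case: (boolP ((T' != T) || (q != p))) => Ho.
    apply: descr_inv_frame (inv_descr H T' q) (creating_upd Hcs q T') _ _ _ _ => //.
    by rewrite /m' mmut_set_mut_other.
  move: Ho; rewrite negb_or !negbK => /andP [/eqP -> /eqP ->].
  move: (inv_descr H T p); rewrite /descr_inv updE eqxx Hl /= eqxx Hmv size_set_nth_lt //.
  by rewrite Hseq'.
- by apply: (mem_frame_set_mut H (or_introl _)) => //; rewrite eqxx.
- split => //; split; first exact: create_linearized_upd.
  split => // i; rewrite Hmv nth_set_nth /= ltnS leq_eqVlt => /orP [/eqP ->|Hik].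
    by rewrite eqxx.
  by rewrite (ltn_eqF Hik); apply: Hj.
Qed.

Lemma create_return_inv c A p T a b old t1 :
  sim_inv c A -> cloc c p = LCN2 n T a b old t1 ->
  exists A', sim_inv (Config (set_mut (cmem c) T p (old.+2, (mmut (cmem c) T p).2))
     (upd (cloc c) p (LIdle Ty V n)) (cclk c).+1
     (rcons (chist c) (t1, (p, OCreate n T a b, RPtr V (p, old.+2))))) A'.
Proof.
move=> H Hl; have := inv_local H p; rewrite Hl => -[Hsz [[Ht1 Hsp] [Hi Hmv]]].
have := inv_descr H T p; rewrite /descr_inv Hl /= eqxx => -[Hsize [Hseq [Hcur Hcont]]].
set m' := set_mut _ _ _ _; set l' := LIdle Ty V n.
have Hcn T' q : ~~ ((T' == T) && (q == p)) ->
    creating (upd (cloc c) p l' q) T' = creating (cloc c q) T'.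
  by apply: creating_upd_other => T0 HT; rewrite Hl /l' /= eq_sym (negbTE HT).
have Hmo T' q : ~~ ((T' == T) && (q == p)) -> mmut m' T' q = mmut (cmem c) T' q.
  by rewrite /m' mmut_set_mut => /negbTE ->.
have Hmp : mmut m' T p = (old.+2, mutables (cmem c) T p) by rewrite /m' mmut_set_mut !eqxx.
have Hls : lin_step c A p l' (rcons (chist c) (t1, (p, OCreate n T a b, RPtr V (p, old.+2))))
                    (A (cclk c)).
  by apply: LinReturnEarlier; rewrite ?Hl.
apply: (sim_inv_step H Hls).
- move=> T' q; case: (boolP ((T' == T) && (q == p))) => Htp; last first.
    by apply: descr_inv_frame (inv_descr H T' q) (Hcn _ _ Htp) (Hmo _ _ Htp) _ _ _.
  case/andP: Htp => /eqP -> /eqP ->.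
  rewrite /descr_inv updE eqxx /l' /= /seqno /mutables Hmp /=; split => //.
  right; split => //; split => //; rewrite Hcont /stored /= -Hmv; split; first by case: Hsz.
  by split => [i Hi'|]; rewrite ?Hi // /mutables Hmp.
- apply: created_bounded_eq (inv_created H) => T' q; rewrite /seq_created.
  case: (boolP ((T' == T) && (q == p))) => Htp; last by rewrite Hcn // /seqno Hmo.
  by case/andP: Htp => /eqP -> /eqP ->; rewrite updE eqxx Hl /= eqxx /seqno Hmp.
- move=> T' q s /returned_rcons_inv [/(inv_returned H) /andP [Hs0 Hs]|].
    rewrite Hs0 /=; apply: leq_trans Hs _; rewrite /seq_returned.
    case: (boolP ((T' == T) && (q == p))) => Htp; last by rewrite Hcn // /seqno Hmo.
    case/andP: Htp => /eqP -> /eqP ->; rewrite updE eqxx Hl /= eqxx /seqno Hmp.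
    exact: leqW (leqnSn _).
  case=> t [q' [a' [b' [_ _ <- _ _ <- <-]]]].
  by rewrite /seq_returned updE eqxx /l' /= /seqno Hmp.
- apply: (local_inv_upd H) => //; last by move=> T' d; apply: returned_rcons.
  apply: (mem_frame_set_mut H (or_intror _)); last by rewrite eqxx.
  by rewrite /seq_returned Hl /= eqxx leqnSn.
Qed.

Lemma return_mutate_inv c A p T q s j v o r :
  sim_inv c A -> ~~ in_create (cloc c p) -> (forall T a b, o <> OCreate n T a b) ->
  returned (chist c) T (q, s) -> j < nmut T -> seqno (cmem c) T q = s ->
  spec_step vdef (A (cclk c)) p o r (aset_mut vdef (A (cclk c)) T (q, s) j v) ->
  exists A', sim_inv (Config (set_mut (cmem c) T q ((mmut (cmem c) T q).1,
                                set_nth vdef (mmut (cmem c) T q).2 j v))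
     (upd (cloc c) p (LIdle Ty V n)) (cclk c).+1 (rcons (chist c) (cclk c, (p, o, r)))) A'.
Proof.
move=> H /not_in_create [Hcnp Hpt] Ho Hret Hj Hseq Hsp; have Hs0 := inv_returned H Hret.
have [Hcnq _ [G1 [G2 G3]]] := seqno_valid (inv_descr H) Hs0 Hseq.
set N := cclk c; set S := aset_mut vdef (A N) T (q, s) j v; set m' := set_mut _ _ _ _.
set l' := LIdle Ty V n.
have Hcu q' T' : creating (upd (cloc c) p l' q') T' = creating (cloc c q') T'.
  by apply: creating_upd => T0; rewrite Hcnp.
have Hseq' T' q' : seqno m' T' q' = seqno (cmem c) T' q'.
  by rewrite /seqno /m' mmut_set_mut; case: ifP => // /andP [/eqP -> /eqP ->].
have Hmo T' q' : ~~ ((T' == T) && (q' == q)) -> mmut m' T' q' = mmut (cmem c) T' q'.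
  by rewrite /m' mmut_set_mut => /negbTE ->.
have Hret' T' d : returned (rcons (chist c) (N, (p, o, r))) T' d -> returned (chist c) T' d.
  by case/returned_rcons_inv => // -[t [q' [a [b [_ _ Eo _]]]]]; case: (Ho _ _ _ Eo).
have Hls : lin_step c A p l' (rcons (chist c) (N, (p, o, r))) S by apply: LinReturnNow.
apply: (sim_inv_step H Hls).
- move=> T' q'; case: (boolP ((T' == T) && (q' == q))) => Htq; last first.
    apply: descr_inv_frame (inv_descr H T' q') (Hcu _ _) (Hmo _ _ Htq) _ _ _ => //.
    move=> s'; rewrite /S acont_aset_mut; case: (T' == T) Htq => //= Htq.
    by rewrite xpair_eqE (negbTE Htq).
  case/andP: Htq => /eqP -> /eqP ->.
  have [Hsize] := inv_descr H T q; rewrite Hcnq => -[[Hz _]|[Hpos [Hcur _]]].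
    by move: Hs0; rewrite -Hseq Hz.
  rewrite /descr_inv Hcu Hcnq Hseq'; split.
    have Hjs : j < size (mutables (cmem c) T q) by rewrite Hsize.
    by rewrite /mutables /m' mmut_set_mut !eqxx /= size_set_nth_lt.
  right; split => //; split; first by rewrite Hcur.
  rewrite Hseq /S acont_aset_mut !eqxx /stored /=; split => //; split => //.
  by rewrite /mutables /m' mmut_set_mut !eqxx /= G3.
- by apply: created_bounded_eq (inv_created H) => T' q'; rewrite /seq_created Hcu Hseq'.
- by apply: returned_bounded_eq Hret' (inv_returned H) => T' q'; rewrite /seq_returned Hcu Hseq'.
- apply: (local_inv_upd H) => //; last by move=> T' d; apply: returned_rcons.
  by apply: (mem_frame_set_mut H (or_introl _)) => // _; split.
Qed.

Lemma lin_time_idle c A p t : timeline_inv c A ->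
  lin_time (cloc c p) = Some t -> pending_time (cloc c p) = None -> A t.+1 = A t.
Proof.
move=> H Hl Hp; apply: (tl_idle H); first exact: tl_lin_lt H _ _ Hl.
  exact: tl_lin_fresh H _ _ Hl.
by move=> q Hq; have E := tl_lin_uniq H (pending_time_lin Hq) Hl; subst q; rewrite Hp in Hq.
Qed.

Lemma invoke_inv c A p o :
  sim_inv c A -> cloc c p = LIdle Ty V n -> wf_inv nimm nmut (chist c) o ->
  exists A', sim_inv (Config (cmem c) (upd (cloc c) p (start o)) (cclk c).+1 (chist c)) A'.
Proof.
move=> H El Hw; apply: (silent_step_inv H); rewrite ?El //.
- by apply: LinSilent; rewrite El; case: o Hw.
- by move=> T; case: o Hw.
- by case: o Hw => //= T d f dv Hw; exact: Hw.
Qed.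

Lemma read_field_start_inv c A p T q s f dv :
  sim_inv c A -> cloc c p = LRF0 T (q, s) f dv ->
  exists A', sim_inv (Config (cmem c) (upd (cloc c) p (LRF1 T (q, s) f dv
      (match f with FImm i => mimm (cmem c) T q i | FMut j => nth vdef (mmut (cmem c) T q).2 j end)
      (cclk c))) (cclk c).+1 (chist c)) A'.
Proof.
move=> H El; have := inv_local H p; rewrite El => -[Hr Hf].
apply: (silent_step_inv H); rewrite ?El //; first by apply: LinNow; rewrite ?El //; right.
split => //; split => //; split => // Hseq.
have [_ Hv [_ [G2 G3]]] := seqno_valid (inv_descr H) (inv_returned H Hr) Hseq.
by rewrite timeline_upd_le //; split => //; case: f Hf {El} => [i|j] Hf /=; rewrite ?G2 ?G3.
Qed.

Lemma read_field_return_inv c A p T q s f dv x t0 :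
  sim_inv c A -> cloc c p = LRF1 T (q, s) f dv x t0 ->
  exists A', sim_inv (Config (cmem c) (upd (cloc c) p (LIdle Ty V n)) (cclk c).+1
      (rcons (chist c) (if (mmut (cmem c) T q).1 == s
                        then (t0, (p, ORead T (q, s) f dv, RVal n x))
                        else (cclk c, (p, ORead T (q, s) f dv, RVal n dv))))) A'.
Proof.
move=> H El; have := inv_local H p; rewrite El => -[Hr [_ [_ Hv]]].
have Hcr : ~~ in_create (cloc c p) by rewrite El.
case: (eqVneq (seqno (cmem c) T q) s) => Hseq.
  have [Hvalid Hx] := Hv Hseq; have Hlin : lin_time (cloc c p) = Some t0 by rewrite El.
  apply: (return_readonly_inv H Hcr) => //; apply: (LinReturnEarlier Hlin) => //=.
  have [_ Hpt] := not_in_create Hcr.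
  by rewrite (lin_time_idle (inv_timeline H) Hlin Hpt) -Hx; apply: SReadValid.
apply: (return_now_inv H Hcr) => //; apply: SReadInvalid; move/eqP: Hseq => Hseq.
exact: (seqno_invalid (inv_descr H) (inv_returned H Hr) Hseq).
Qed.

Lemma read_imm_step_inv c A p T q s k acc :
  sim_inv c A -> cloc c p = LRI T (q, s) k acc -> k < nimm T ->
  exists A', sim_inv (Config (cmem c)
    (upd (cloc c) p (LRI T (q, s) k.+1 (rcons acc (mimm (cmem c) T q k)))) (cclk c).+1
    (chist c)) A'.
Proof.
move=> H El Hk; have := inv_local H p; rewrite El => -[Hr [_ [Hsz Hv]]].
apply: (silent_step_inv H); rewrite ?El //; first by apply: LinSilent; rewrite El.
split => //; split => //; split; first by rewrite size_rcons Hsz.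
move=> /= Hseq i; rewrite ltnS leq_eqVlt nth_rcons Hsz => /orP [/eqP ->|Hik].
  by rewrite ltnn eqxx.
by rewrite Hik; apply: Hv.
Qed.

Lemma read_imm_return_inv c A p T q s k acc :
  sim_inv c A -> cloc c p = LRI T (q, s) k acc -> nimm T <= k ->
  exists A', sim_inv (Config (cmem c) (upd (cloc c) p (LIdle Ty V n)) (cclk c).+1
      (rcons (chist c) (cclk c, (p, OReadImm V T (q, s),
         if (mmut (cmem c) T q).1 == s then RVals n acc else RBot V n)))) A'.
Proof.
move=> H El Hk; have := inv_local H p; rewrite El => -[Hr [Hk' [Hsz Hv]]].
apply: (return_now_inv H) => //; first by rewrite El.
case: (eqVneq (seqno (cmem c) T q) s) => Hseq; last first.
  apply: SReadImmInvalid; move/eqP: Hseq => Hseq.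
  exact: (seqno_invalid (inv_descr H) (inv_returned H Hr) Hseq).
have [_ Hvalid [G1 [G2 _]]] := seqno_valid (inv_descr H) (inv_returned H Hr) Hseq.
suff -> : acc = (acont (A (cclk c)) T (q, s)).1 by apply: SReadImmValid.
have Ek : k = nimm T by apply/eqP; rewrite eqn_leq Hk Hk'.
apply: (@eq_from_nth _ vdef); first by rewrite G1 Hsz.
by move=> i; rewrite Hsz => Hi; rewrite G2 -?Ek // Hv.
Qed.

Lemma create_step_inv c A p m' l' e :
  sim_inv c A -> in_create (cloc c p) ->
  pstep nimm nmut vdef p (cclk c) (chist c) (cmem c) (cloc c p) m' l' e ->
  exists A', sim_inv (Config m' (upd (cloc c) p l') (cclk c).+1
                       (if e is Some x then rcons (chist c) x else chist c)) A'.
Proof.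
move=> H; have Hloc := inv_local H p; move El: (cloc c p) => l Hcr Hp.
rewrite El in Hloc; case: Hp El Hcr Hloc => //=.
- move=> T a b El _ Hsz; apply: (silent_step_inv H); rewrite ?El //.
  by apply: LinSilent; rewrite El.
- by move=> T a b old El _ _; apply: create_lin_inv H El.
- by move=> T a b old t1 k Hk El _ _; apply: create_imm_inv H El Hk.
- move=> T a b old t1 k Hk El _ [Hsz [Hok Hi]].
  apply: (silent_step_inv H); rewrite ?El //; first by apply: LinSilent; rewrite El.
  split => //; split; first exact: create_linearized_upd.
  by split => // i Hi'; apply: Hi; apply: leq_trans Hi' Hk.
- by move=> T a b old t1 k Hk El _ _; apply: create_mut_inv H El Hk.
- move=> T a b old t1 k Hk El _ [Hsz [Hok [Hi Hj]]].
  apply: (silent_step_inv H); rewrite ?El //; first by apply: LinSilent; rewrite El.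
  split => //; split; first exact: create_linearized_upd.
  split => //; have [Hsize _] := inv_descr H T p.
  apply: (@eq_from_nth _ vdef); first by rewrite Hsize; case: Hsz.
  by move=> i; rewrite Hsize => Hi'; apply: Hj; apply: leq_trans Hi' Hk.
- by move=> T a b old t1 El _ _; apply: create_return_inv H El.
Qed.

Lemma access_step_inv c A p m' l' e :
  sim_inv c A -> ~~ in_create (cloc c p) ->
  pstep nimm nmut vdef p (cclk c) (chist c) (cmem c) (cloc c p) m' l' e ->
  exists A', sim_inv (Config m' (upd (cloc c) p l') (cclk c).+1
                       (if e is Some x then rcons (chist c) x else chist c)) A'.
Proof.
move=> H Hcr; have Hloc := inv_local H p; move El: (cloc c p) => l Hp.
have Hval T q s := seqno_valid (inv_descr H) (T := T) (q := q) (s := s).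
have Hinval T q s := seqno_invalid (inv_descr H) (T := T) (q := q) (s := s).
have Hl := Hcr; rewrite El in Hl Hloc; case: Hp El Hl Hloc => //=.
- by move=> o Hw El _ _; apply: invoke_inv H El Hw.
- by move=> T q s f dv El _ _; apply: read_field_start_inv H El.
- by move=> T q s f dv x t0 El _ _; apply: read_field_return_inv H El.
- by move=> T q s k acc Hk El _ _; apply: read_imm_step_inv H El Hk.
- by move=> T q s k acc Hk El _ _; apply: read_imm_return_inv H El Hk.
- move=> T q s j v /eqP Hne El _ [Hr _]; apply: (return_now_inv H); rewrite ?El //.
  exact: SWriteInvalid (Hinval _ _ _ (inv_returned H Hr) Hne).
- move=> T q s j v Hseq El _ [Hr Hj]; apply: (silent_step_inv H); rewrite ?El //.
  by apply: LinSilent; rewrite El.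
- move=> T q s j v w <- El _ [Hr [Hj Hseq]].
  have [_ Hv _] := Hval _ _ _ (inv_returned H Hr) Hseq.
  by apply: (return_mutate_inv H Hcr _ Hr Hj Hseq) => //; apply: SWriteValid.
- move=> T q s j v w _ El _ [Hr [Hj _]]; apply: (silent_step_inv H); rewrite ?El //.
  by apply: LinSilent; rewrite El.
- move=> T q s j e0 w /eqP Hne El _ [Hr _]; apply: (return_now_inv H); rewrite ?El //.
  exact: SCasInvalid (Hinval _ _ _ (inv_returned H Hr) Hne).
- move=> T q s j e0 w Hseq /eqP Hne El _ [Hr _].
  have [_ Hv [_ [_ G3]]] := Hval _ _ _ (inv_returned H Hr) Hseq.
  apply: (return_now_inv H); rewrite ?El // -/(mutables _ T q) -G3.
  by apply: SCasValidNeq; rewrite // G3.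
- move=> T q s j e0 w Hseq He El _ [Hr Hj]; apply: (silent_step_inv H); rewrite ?El //.
  by apply: LinSilent; rewrite El.
- move=> T q s j e0 w x <- El _ [Hr [Hj [Hseq He]]].
  have [_ Hv [_ [_ G3]]] := Hval _ _ _ (inv_returned H Hr) Hseq.
  by apply: (return_mutate_inv H Hcr _ Hr Hj Hseq) => //; apply: SCasValidEq; rewrite // G3.
- move=> T q s j e0 w x _ El _ [Hr [Hj _]]; apply: (silent_step_inv H); rewrite ?El //.
  by apply: LinSilent; rewrite El.
Qed.

Lemma step_inv c c' A : sim_inv c A -> step nimm nmut vdef c c' -> exists A', sim_inv c' A'.
Proof.
move=> H Hs; destruct Hs as [c p m' l' e Hp].
have [Hcr|Hcr] := boolP (in_create (cloc c p)).
  exact: create_step_inv H Hcr Hp.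
exact: access_step_inv H Hcr Hp.
Qed.

Lemma reachable_inv init_imm init_mut c :
  (forall T p, size (init_mut T p) = nmut T) ->
  reachable nimm nmut vdef init_imm init_mut c -> exists A, sim_inv c A.
Proof.
move=> Hinit; elim=> [|c0 c1 _ [A H] Hs]; last exact: step_inv H Hs.
by exists (fun _ => ainit Ty V n); apply: sim_inv_init.
Qed.

End Simulation.

Theorem mainTheorem1 (Ty : eqType) (nimm nmut : Ty -> nat) (V : eqType) (vdef : V)
  (n : nat) (init_imm : Ty -> 'I_n -> nat -> V) (init_mut : Ty -> 'I_n -> seq V)
  (Hinit : forall T p, size (init_mut T p) = nmut T)
  (c : config Ty V n) :
  reachable nimm nmut vdef init_imm init_mut c ->
  spec_legal vdef (ainit Ty V n) (lin_seq c).
Proof.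
by case/(reachable_inv Hinit) => A; apply: sim_inv_lin_seq_legal.
Qed.
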